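(* Let $T_0=pD^2+q_0D+r_0$ be a second-order rational operator, let $\phi_1,\dots,\phi_n$ be quasi-rational functions with $T_0\phi_k=\lambda_k\phi_k$ for pairwise distinct constants $\lambda_1,\dots,\lambda_n$, and let $b_1,\dots,b_n$ be nonzero rational functions. For $k=1,\dots,n$ set $\sigma_k=\sum_{j=1}^k (\log b_j)'$, $\upsilon_k=\phi_{(1,\dots,k)}'/\phi_{(1,\dots,k)}$, and $\sigma_0=\upsilon_0=0$; $q_k=q_0+kp'-2p\sigma_k$, $r_k=r_0+kq_0'+\tfrac12k(k-1)p''+\upsilon_kp'-\sigma_k(q_0+kp')+(\sigma_k^2-\sigma_k'+2\upsilon_k')p$, $w_k=\sigma_{k-1}+\upsilon_k-\upsilon_{k-1}$, and define $T_k=pD^2+q_kD+r_k$, $A_k=b_k(D-w_k)$. Then $A_kT_{k-1}=T_kA_k$ for all $k=1,\dots,n$; i.e. $T_0\to T_1\to\cdots\to T_n$ is an $n$-step rational Darboux transformation.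
   Context: $D=d/dz$, primes denote $d/dz$. A rational operator has rational coefficients; a function is quasi-rational if its logarithmic derivative is rational. $\phi_{(i_1,\dots,i_k)}:=\mathrm{Wr}[\phi_{i_1},\dots,\phi_{i_k}]$ denotes the Wronskian determinant. An $n$-step rational Darboux transformation $T_0\to\cdots\to T_n$ means there are first-order rational operators $A_k$ with $A_kT_{k-1}=T_kA_k$. *)

From HB Require Import structures.
From mathcomp Require Import all_boot all_order all_algebra.
From mathcomp Require Import complex.
From mathcomp Require Import reals.
Set Implicit Arguments. Unset Strict Implicit. Unset Printing Implicit Defensive.
Import Order.TTheory GRing.Theory Num.Theory.
Local Open Scope ring_scope.

(* A derivation D on a field E (playing the role of d/dz). *)
Definition derivation (E : fieldType) (D : E -> E) : Prop :=
  (forall x y, D (x + y) = D x + D y) /\ (forall x y, D (x * y) = D x * y + x * D y).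

Section Diff.
Variables (C : fieldType) (E : fieldType) (D : E -> E) (iota : {poly C} -> E).

Definition rationalE (f : E) : Prop :=
  exists (a c : {poly C}), c != 0 /\ f = iota a / iota c.

Definition quasi_rational (f : E) : Prop := f != 0 /\ rationalE (D f / f).

Definition cst (c : C) : E := iota c%:P.

Definition wronskian (phi : nat -> E) (k : nat) : E :=
  \det (\matrix_(i < k, j < k) iter j D (phi i.+1)).

Definition op2 (p q r f : E) : E := p * D (D f) + q * D f + r * f.

Definition op1 (b w f : E) : E := b * (D f - w * f).

Variables (p q0 r0 : E) (b phi : nat -> E).

Definition sigma (k : nat) : E := \sum_(1 <= j < k.+1) D (b j) / b j.
Definition upsilon (k : nat) : E := D (wronskian phi k) / wronskian phi k.
Definition qk (k : nat) : E := q0 + k%:R * D p - 2%:R * p * sigma k.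
Definition rk (k : nat) : E :=
  r0 + k%:R * D q0 + (k%:R * (k%:R - 1) / 2%:R) * D (D p) + upsilon k * D p
  - sigma k * (q0 + k%:R * D p)
  + (sigma k ^+ 2 - D (sigma k) + 2%:R * D (upsilon k)) * p.
Definition wk (k : nat) : E := sigma k.-1 + upsilon k - upsilon k.-1.

End Diff.

From Pilot Require Import Defs.
From HB Require Import structures.
From mathcomp Require Import all_boot all_order all_algebra.
From mathcomp Require Import complex.
From mathcomp Require Import reals.
From mathcomp Require Import ring.
Set Implicit Arguments. Unset Strict Implicit. Unset Printing Implicit Defensive.
Import Order.TTheory GRing.Theory Num.Theory.
Local Open Scope ring_scope.

(* Put psi_j := b_1...b_j * Wr[phi_1..phi_(j+1)] / Wr[phi_1..phi_j].  Reducing a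
   Wronskian one column at a time ([wronskian_reduce]) shows that w_(j+1) is the logarithmic
   derivative of psi_j, and, inductively, that psi_j is an eigenfunction of T_j.  A first-order
   operator b (D - w) intertwines p D^2 + q D + r with p D^2 + Q D + R, Q and R given by the
   recurrences satisfied by q_k and r_k, as soon as the Riccati expression
   p (w' + w^2) + q w + r is constant, which holds when w is the logarithmic derivative of an
   eigenfunction.  The intertwiner carries the remaining eigenfunctions of T_j to eigenfunctions
   of T_(j+1), which stay nonzero because the eigenvalues are distinct; rationality of all
   coefficients follows from closure of rational functions under field operations and D. *)

Section Derivation.
Variables (E : fieldType) (D : E -> E).
Hypothesis hD : derivation D.

Lemma derD x y : D (x + y) = D x + D y. Proof. by case: hD. Qed.
Lemma derM x y : D (x * y) = D x * y + x * D y. Proof. by case: hD. Qed.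

Lemma der0 : D 0 = 0.
Proof. by apply: (addrI (D 0)); rewrite -derD !addr0. Qed.

Lemma derN x : D (- x) = - D x.
Proof. by apply/eqP; rewrite -addr_eq0 -derD addNr der0. Qed.

Lemma derB x y : D (x - y) = D x - D y. Proof. by rewrite derD derN. Qed.

Lemma der1 : D 1 = 0.
Proof. by apply: (addrI (D 1)); rewrite addr0 -[in RHS](mulr1 1) derM mulr1 mul1r. Qed.

Lemma der_nat m : D m%:R = 0.
Proof. by elim: m => [|m IHm]; rewrite ?der0 // -addn1 natrD derD der1 IHm addr0. Qed.

Lemma derV x : D x^-1 = - D x / x ^+ 2.
Proof.
have [->|x0] := eqVneq x 0; first by rewrite invr0 der0 oppr0 mul0r.
have : D (x * x^-1) = 0 by rewrite divff // der1.
rewrite derM => /eqP; rewrite addrC addr_eq0 => /eqP Dx.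
by apply: (mulfI x0); rewrite Dx; field.
Qed.

Lemma der_div x y : D (x / y) = D x / y - x * D y / y ^+ 2.
Proof. by rewrite derM derV; ring. Qed.

Lemma der_sum I (r : seq I) (P : pred I) (F : I -> E) :
  D (\sum_(i <- r | P i) F i) = \sum_(i <- r | P i) D (F i).
Proof. exact: (big_morph D derD der0). Qed.

Lemma logderM u v : u != 0 -> v != 0 -> D (u * v) / (u * v) = D u / u + D v / v.
Proof. by move=> u0 v0; rewrite derM; field; rewrite u0 v0. Qed.

Lemma der_prod k (F : nat -> E) : (forall l, (l < k)%N -> F l != 0) ->
  D (\prod_(l < k) F l) = (\sum_(l < k) D (F l) / F l) * \prod_(l < k) F l.
Proof.
elim: k => [|k IHk] F0; first by rewrite !big_ord0 der1 mul0r.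
rewrite !big_ord_recr /= derM IHk => [|l /ltnW]; last exact: F0.
by field; apply: F0.
Qed.

Lemma prod_nat_neq0 k (F : nat -> E) : (forall l, (l < k)%N -> F l != 0) ->
  \prod_(l < k) F l != 0.
Proof. by move=> F0; rewrite prodf_seq_neq0; apply/allP => l _; apply: F0. Qed.

(* [leibniz_coef c j l] is the coefficient of [D^l f] in [D^j (c * f)]. *)
Fixpoint leibniz_coef (c : E) (j : nat) : nat -> E :=
  if j is j'.+1 then fun l =>
    D (leibniz_coef c j' l) + (if l is l'.+1 then leibniz_coef c j' l' else 0)
  else fun l => if l == 0%N then c else 0.

Lemma leibniz_coef_gt c j l : (j < l)%N -> leibniz_coef c j l = 0.
Proof.
elim: j l => [|j IHj] [|l] //= jl.
by rewrite !IHj ?der0 ?addr0 // ltnW.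
Qed.

Lemma leibniz_coef_diag c j : leibniz_coef c j j = c.
Proof. by elim: j => //= j ->; rewrite leibniz_coef_gt // der0 add0r. Qed.

Lemma iter_derM c f j m : (j < m)%N ->
  iter j D (c * f) = \sum_(l < m) leibniz_coef c j l * iter l D f.
Proof.
case: m => [//|m]; elim: j => [|j IHj] jm.
  by rewrite big_ord_recl /= big1 ?addr0 // => i _; rewrite mul0r.
rewrite iterS IHj ?(ltnW jm) // der_sum.
under eq_bigr do rewrite derM.
under [RHS]eq_bigr do rewrite /= mulrDl.
rewrite !big_split /=; congr (_ + _).
rewrite big_ord_recr big_ord_recl /= leibniz_coef_gt // !mul0r addr0 add0r.
by apply: eq_bigr => i _.
Qed.

Lemma eq_wronskian f g k : (forall i, f i = g i) -> wronskian D f k = wronskian D g k.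
Proof. by move=> fg; congr (\det _); apply/matrixP => i j; rewrite !mxE fg. Qed.

(* The matrix of [c * f_i] is that of [f_i] times a triangular matrix with diagonal [c]. *)
Lemma wronskianZ c f k : wronskian D (fun i => c * f i) k = c ^+ k * wronskian D f k.
Proof.
rewrite /wronskian.
set M := \matrix_(i < k, j < k) iter j D (f i.+1).
set U := \matrix_(l < k, j < k) leibniz_coef c j l.
have -> : \matrix_(i < k, j < k) iter j D (c * f i.+1) = M *m U.
  apply/matrixP => i j; rewrite !mxE (iter_derM _ _ (ltn_ord j)).
  by apply: eq_bigr => l _; rewrite !mxE mulrC.
rewrite det_mulmx mulrC -det_tr det_trig.
  rewrite (eq_bigr (fun _ => c)) ?prodr_const ?card_ord // => i _.
  by rewrite !mxE leibniz_coef_diag.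
by apply/forallP => i; apply/forallP => j; apply/implyP => ij; rewrite !mxE leibniz_coef_gt.
Qed.

Lemma wronskian_first1 h k : h 1%N = 1 ->
  wronskian D h k.+1 = wronskian D (fun i => D (h i.+1)) k.
Proof.
move=> h1; rewrite /wronskian (expand_det_row _ ord0) big_ord_recl /=.
have iter_der1 j : iter j.+1 D 1 = 0 by rewrite iterSr der1; elim: j => //= j ->; rewrite der0.
rewrite big1 => [|i _]; last by rewrite !mxE h1 iter_der1 mul0r.
rewrite addr0 !mxE h1 mul1r /cofactor expr0 mul1r.
by congr (\det _); apply/matrixP => i j; rewrite !mxE /= -iterS iterSr.
Qed.

(* One step of the reduction of a Wronskian: [reduce g i = g_1 * D (g_(i+1) / g_1)]. *)
Definition reduce (g : nat -> E) (i : nat) : E := D (g i.+1) - D (g 1%N) / g 1%N * g i.+1.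

Lemma reduce_logder g i : g i.+1 != 0 ->
  reduce g i = g i.+1 * (D (g i.+1) / g i.+1 - D (g 1%N) / g 1%N).
Proof. by move=> g0; rewrite mulrBr mulrCA divff // mulr1 [_ * (_ / _)]mulrC. Qed.

Lemma wronskian_reduce g k : g 1%N != 0 ->
  wronskian D g k.+1 = g 1%N * wronskian D (reduce g) k.
Proof.
move=> g1; pose h i := g i / g 1%N.
have gh i : g i = g 1%N * h i by rewrite mulrC divfK.
have reduce_h i : reduce g i = g 1%N * D (h i.+1) by rewrite /reduce gh derM; field; exact: g1.
rewrite (eq_wronskian k.+1 gh) wronskianZ wronskian_first1; last exact: divff.
by rewrite (eq_wronskian k reduce_h) wronskianZ exprS mulrA.
Qed.

Lemma wronskian_prod g k : (forall l, (l < k)%N -> iter l reduce g 1%N != 0) ->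
  wronskian D g k = \prod_(l < k) iter l reduce g 1%N.
Proof.
elim: k g => [|k IHk] g g0; first by rewrite big_ord0 /wronskian det_mx00.
rewrite wronskian_reduce ?(g0 0%N) // IHk => [|l lk]; last by rewrite -iterSr g0.
by rewrite big_ord_recl; congr (_ * _); apply: eq_bigr => i _; rewrite iterSr.
Qed.

Lemma op2_cstM p q r y f : D y = 0 -> op2 D p q r (y * f) = y * op2 D p q r f.
Proof. by move=> Dy; rewrite /op2 !(derD, derM) Dy der0; ring. Qed.

Lemma op1_cstM b w y f : D y = 0 -> op1 D b w (y * f) = y * op1 D b w f.
Proof. by move=> Dy; rewrite /op1 derM Dy; ring. Qed.

(* Two eigenfunctions with the same logarithmic derivative are proportional. *)
Lemma eigen_logder_neq p q r x y a c : x != 0 -> y != 0 -> a != c ->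
  op2 D p q r x = a * x -> op2 D p q r y = c * y -> D x / x != D y / y.
Proof.
move=> x0 y0 ac Tx Ty; apply: contra ac => /eqP logder_eq.
have Dxy : D (x / y) = 0.
  have Dy : D y = D x / x * y by rewrite logder_eq divfK.
  by rewrite der_div Dy; field; rewrite x0 y0.
have xE : x = x / y * y by rewrite divfK.
have : a * x = c * x by rewrite -Tx [in LHS]xE op2_cstM // Ty mulrCA -xE.
by move/(mulIf x0)/eqP.
Qed.

Lemma riccati_cst p q r w psi c : psi != 0 -> D psi = w * psi -> D c = 0 ->
  op2 D p q r psi = c * psi -> D (p * (D w + w ^+ 2) + q * w + r) = 0.
Proof.
move=> psi0 Dpsi Dc Tpsi; suff -> : p * (D w + w ^+ 2) + q * w + r = c by [].
by apply: (mulIf psi0); rewrite -Tpsi /op2 Dpsi derM Dpsi; ring.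
Qed.

Lemma darboux_intertwining p q r Q R b w : b != 0 ->
  Q = q + D p - 2%:R * p * (D b / b) ->
  R = r + D q - p * D (D b / b) + p * (D b / b) ^+ 2 + 2%:R * p * D w
      - q * (D b / b) - D p * (D b / b) + D p * w ->
  D (p * (D w + w ^+ 2) + q * w + r) = 0 ->
  forall f, op1 D b w (op2 D p q r f) = op2 D p Q R (op1 D b w f).
Proof.
move=> b0 -> -> riccati f; rewrite /op1 /op2.
set be := D b / b; have Db : D b = be * b by rewrite /be divfK.
clearbody be; rewrite !(derD, derB, derM, derN, expr2) in riccati *.
have -> : D r = - (D p * (D w + w * w) + p * (D (D w) + (D w * w + w * D w))
                   + (D q * w + q * D w)).
  by apply/eqP; rewrite -subr_eq0 opprK addrC !addrA -riccati; apply/eqP; ring.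
by rewrite Db derM Db; ring.
Qed.

End Derivation.

Section RationalClosure.
Variables (C E : fieldType) (D : E -> E) (iota : {rmorphism {poly C} -> E}).
Hypotheses (hD : derivation D) (iota_inj : injective iota)
  (der_iota : forall a : {poly C}, D (iota a) = iota a^`()).
Local Notation rational := (rationalE iota).

Lemma iota_eq0 a : (iota a == 0) = (a == 0).
Proof. by rewrite -(rmorph0 iota) (inj_eq iota_inj). Qed.

Lemma rational_iota a : rational (iota a).
Proof. by exists a, 1; rewrite oner_neq0 rmorph1 divr1. Qed.

Lemma rational_nat m : rational m%:R.
Proof. by rewrite -(rmorph_nat iota); apply: rational_iota. Qed.

Lemma rational1 : rational 1.
Proof. by rewrite -(rmorph1 iota); apply: rational_iota. Qed.

Lemma rationalD x y : rational x -> rational y -> rational (x + y).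
Proof.
move=> [a [c [c0 ->]]] [a' [c' [c'0 ->]]].
exists (a * c' + a' * c), (c * c'); rewrite mulf_neq0 //.
by split=> //; rewrite rmorphD !rmorphM; field; rewrite !iota_eq0 c0 c'0.
Qed.

Lemma rationalN x : rational x -> rational (- x).
Proof. by move=> [a [c [c0 ->]]]; exists (- a), c; rewrite rmorphN mulNr. Qed.

Lemma rationalB x y : rational x -> rational y -> rational (x - y).
Proof. by move=> ? ?; apply/rationalD/rationalN. Qed.

Lemma rationalM x y : rational x -> rational y -> rational (x * y).
Proof.
move=> [a [c [c0 ->]]] [a' [c' [c'0 ->]]].
exists (a * a'), (c * c'); rewrite mulf_neq0 //.
by split=> //; rewrite !rmorphM; field; rewrite !iota_eq0 c0 c'0.
Qed.

Lemma rationalV x : rational x -> rational x^-1.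
Proof.
move=> [a [c [c0 ->]]]; have [->|a0] := eqVneq a 0.
  by rewrite rmorph0 mul0r invr0 -(rmorph0 iota); apply: rational_iota.
by exists c, a; rewrite invfM invrK mulrC.
Qed.

Lemma rationalX x m : rational x -> rational (x ^+ m).
Proof.
move=> rx; elim: m => [|m IHm]; last by rewrite exprS; apply: rationalM.
by rewrite expr0; apply: rational1.
Qed.

Lemma rational_der x : rational x -> rational (D x).
Proof.
move=> [a [c [c0 ->]]]; rewrite der_div // !der_iota.
by apply: rationalB; do !apply: rationalM;
  do ?[apply: rationalV | apply: rationalX | apply: rationalM]; apply: rational_iota.
Qed.

Lemma rational_sum k (F : nat -> E) : (forall l, (l < k)%N -> rational (F l)) ->
  rational (\sum_(l < k) F l).
Proof.
elim: k => [|k IHk] rF; first by rewrite big_ord0 -(rmorph0 iota); apply: rational_iota.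
rewrite big_ord_recr; apply: rationalD; last exact: rF.
by apply: IHk => l /ltnW; apply: rF.
Qed.

Lemma der_cst c : D (cst iota c) = 0.
Proof. by rewrite der_iota derivC rmorph0. Qed.

Lemma cst_inj : injective (cst iota).
Proof. by move=> a c /iota_inj/polyC_inj. Qed.

End RationalClosure.

Section DarbouxChain.
Variables (C E : fieldType) (D : E -> E) (iota : {rmorphism {poly C} -> E}).
Hypotheses (hD : derivation D) (iota_inj : injective iota)
  (der_iota : forall a : {poly C}, D (iota a) = iota a^`()).
Hypothesis two_neq0 : (2%:R : E) != 0.
Variables (p q0 r0 : E) (n : nat) (phi : nat -> E) (lambda : nat -> C) (b : nat -> E).
Hypotheses (hp : rationalE iota p) (hq0 : rationalE iota q0) (hr0 : rationalE iota r0).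
Hypothesis phi_qrat : forall k, (1 <= k <= n)%N -> quasi_rational D iota (phi k).
Hypothesis phi_eigen : forall k, (1 <= k <= n)%N ->
  op2 D p q0 r0 (phi k) = cst iota (lambda k) * phi k.
Hypothesis lambda_neq : forall i j, (1 <= i)%N -> (i < j)%N -> (j <= n)%N -> lambda i != lambda j.
Hypothesis hb : forall k, (1 <= k <= n)%N -> rationalE iota (b k) /\ b k != 0.

Local Notation rational := (rationalE iota).
Local Notation sigma := (sigma D b).
Local Notation upsilon := (upsilon D phi).
Local Notation qk := (qk D p q0 b).
Local Notation rk := (rk D p q0 r0 b phi).
Local Notation wk := (wk D b phi).
Local Notation T k := (op2 D p (qk k) (rk k)).
Local Notation A k := (op1 D (b k) (wk k)).
(* [red j 1] = Wr[phi_1..phi_(j+1)] / Wr[phi_1..phi_j], see [wronskian_prod]. *)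
Local Notation red j := (iter j (reduce D) phi).

Ltac rationality := repeat first
  [ assumption | apply: rational1 | apply: rational_nat | apply: (rationalD iota_inj)
  | apply: (rationalB iota_inj) | apply: rationalN | apply: (rationalM iota_inj) | apply: rationalV
  | apply: (rationalX iota_inj) | apply: (rational_der hD iota_inj der_iota) ].

Definition bprod j := \prod_(l < j) b l.+1.

Lemma sigma_ord k : sigma k = \sum_(l < k) D (b l.+1) / b l.+1.
Proof. by rewrite /Defs.sigma big_add1 big_mkord. Qed.

Lemma sigmaS j : sigma j.+1 = sigma j + D (b j.+1) / b j.+1.
Proof. by rewrite !sigma_ord big_ord_recr. Qed.

Lemma b_neq0 l : (l < n)%N -> b l.+1 != 0.
Proof. by move=> ln; case: (hb (k := l.+1) ln). Qed.

Lemma bprod_neq0 j : (j <= n)%N -> bprod j != 0.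
Proof.
move=> jn; apply: (@prod_nat_neq0 _ j (fun l => b l.+1)) => l lj.
exact/b_neq0/(leq_trans lj).
Qed.

Lemma der_bprod j : (j <= n)%N -> D (bprod j) = sigma j * bprod j.
Proof.
move=> jn; rewrite sigma_ord (@der_prod _ D hD j (fun l => b l.+1)) // => l lj.
exact/b_neq0/(leq_trans lj).
Qed.

Lemma rational_sigma j : (j <= n)%N -> rational (sigma j).
Proof.
move=> jn; rewrite sigma_ord.
apply: (@rational_sum _ _ _ iota_inj j (fun l => D (b l.+1) / b l.+1)) => l lj.
have /hb[rb _] : (1 <= l.+1 <= n)%N by rewrite ltnS (leq_trans lj jn).
by rationality.
Qed.

Lemma upsilon_sum k : (forall l, (l < k)%N -> red l 1%N != 0) ->
  upsilon k = \sum_(l < k) D (red l 1%N) / red l 1%N.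
Proof.
move=> red0; rewrite /Defs.upsilon (wronskian_prod hD red0) (der_prod hD red0) mulfK //.
exact: (@prod_nat_neq0 _ k (fun l => red l 1%N)).
Qed.

Lemma qk0 : qk 0 = q0.
Proof. by rewrite /Defs.qk sigma_ord big_ord0; ring. Qed.

Lemma rk0 : rk 0 = r0.
Proof.
rewrite /Defs.rk sigma_ord big_ord0 /Defs.upsilon /wronskian det_mx00.
by rewrite (der1 hD) !mul0r (der0 hD); ring.
Qed.

(* [bprod j * red j m] is the image of [phi (m + j)] under [A j \o ... \o A 1]. *)
Definition reduced_eigen j := forall m, (1 <= m)%N -> (m + j <= n)%N ->
  [/\ red j m != 0, rational (D (red j m) / red j m) &
      T j (bprod j * red j m) = cst iota (lambda (m + j)) * (bprod j * red j m)].

Lemma reduced_eigen0 : reduced_eigen 0.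
Proof.
move=> m m1; rewrite addn0 => mn; have /phi_qrat[phi0 rphi] : (1 <= m <= n)%N by rewrite m1.
by split=> //; rewrite /bprod big_ord0 !mul1r qk0 rk0 phi_eigen ?m1.
Qed.

Section Step.
Variable j : nat.
Hypotheses (jn : (j < n)%N) (eigen_le : forall l, (l <= j)%N -> reduced_eigen l).

Lemma red1_neq0 l : (l <= j)%N -> red l 1%N != 0.
Proof. by move=> lj; have [] := eigen_le lj (leqnn 1); rewrite ?add1n ?(leq_ltn_trans lj jn). Qed.

Lemma rational_logder_red1 l : (l <= j)%N -> rational (D (red l 1%N) / red l 1%N).
Proof. by move=> lj; have [] := eigen_le lj (leqnn 1); rewrite ?add1n ?(leq_ltn_trans lj jn). Qed.

Lemma wronskian_phi_neq0 : wronskian D phi j != 0.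
Proof.
have red0 l : (l < j)%N -> red l 1%N != 0 by move/ltnW/red1_neq0.
by rewrite (wronskian_prod hD red0) (@prod_nat_neq0 _ j (fun l => red l 1%N)).
Qed.

Lemma upsilonS : upsilon j.+1 = upsilon j + D (red j 1%N) / red j 1%N.
Proof.
rewrite !upsilon_sum ?big_ord_recr // => l lj.
  exact/red1_neq0/ltnW.
by apply: red1_neq0; rewrite -ltnS.
Qed.

Lemma wkS : wk j.+1 = sigma j + D (red j 1%N) / red j 1%N.
Proof. by rewrite /Defs.wk upsilonS /=; ring. Qed.

Lemma qkS : qk j.+1 = qk j + D p - 2%:R * p * (D (b j.+1) / b j.+1).
Proof. by rewrite /Defs.qk sigmaS -natr1; ring. Qed.

Lemma rkS (w := wk j.+1) (be := D (b j.+1) / b j.+1) :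
  rk j.+1 = rk j + D (qk j) - p * D be + p * be ^+ 2 + 2%:R * p * D w
            - qk j * be - D p * be + D p * w.
Proof.
rewrite /w /be /Defs.rk sigmaS upsilonS wkS /Defs.qk -natr1.
rewrite !(derD hD, derB hD, derM hD, derN hD, der_nat hD).
by field; rewrite red1_neq0 // b_neq0 // two_neq0 wronskian_phi_neq0.
Qed.

Lemma darboux_step f : A j.+1 (T j f) = T j.+1 (A j.+1 f).
Proof.
have jn1 : (1 + j <= n)%N by rewrite add1n.
have [_ _ eig] := eigen_le (leqnn j) (leqnn 1) jn1.
have red0 := red1_neq0 (leqnn j).
have bprod0 := bprod_neq0 (ltnW jn).
set psi := bprod j * red j 1%N in eig.
have psi0 : psi != 0 by rewrite mulf_neq0.
have Dpsi : D psi = wk j.+1 * psi.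
  by rewrite wkS /psi derM // der_bprod ?(ltnW jn) //; field.
apply: (darboux_intertwining hD (b_neq0 jn) qkS rkS).
exact: (riccati_cst hD psi0 Dpsi (der_cst der_iota _) eig).
Qed.

End Step.

Lemma bprodS j : bprod j.+1 = bprod j * b j.+1.
Proof. by rewrite /bprod big_ord_recr. Qed.

Section Induction.
Variable j : nat.
Hypotheses (jn : (j.+1 < n)%N) (eigen_le : forall l, (l <= j)%N -> reduced_eigen l).

Lemma op1_bprod_red m : A j.+1 (bprod j * red j m.+1) = bprod j.+1 * red j.+1 m.
Proof.
have red0 := red1_neq0 (ltnW jn) eigen_le (leqnn j).
rewrite /op1 (wkS (ltnW jn) eigen_le) derM // der_bprod ?bprodS; last exact: ltnW (ltnW jn).
by rewrite iterS /reduce; field.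
Qed.

Lemma reduced_eigenS : reduced_eigen j.+1.
Proof.
move=> m m1 mjn; have jn0 := ltnW jn.
have red0 := red1_neq0 jn0 eigen_le (leqnn j).
have mj : (m.+1 + j <= n)%N by rewrite addSnnS.
have j1 : (1 + j <= n)%N by rewrite add1n.
have [u0 ru eig_u] := eigen_le (leqnn j) (ltn0Sn m) mj.
have [_ rv eig_v] := eigen_le (leqnn j) (leqnn 1) j1.
have bprod0 := bprod_neq0 (ltnW jn0).
have redE := @reduce_logder _ D (red j) m u0; rewrite -iterS in redE.
set u := red j m.+1 in u0 ru eig_u redE *; set v := red j 1%N in red0 rv eig_v redE *.
have logder_neq : D u / u - D v / v != 0.
  rewrite subr_eq0 -(inj_eq (addrI (D (bprod j) / bprod j))) -!logderM //.
  apply: eigen_logder_neq eig_u eig_v; rewrite ?mulf_neq0 //.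
  have lt_mj : (1 + j < m.+1 + j)%N by rewrite ltn_add2r.
  by apply: contra_neq (lambda_neq (ltn0Sn j) lt_mj mj) => /(cst_inj iota_inj).
have red_neq0 : red j.+1 m != 0 by rewrite redE mulf_neq0.
split=> //.
  by rewrite redE logderM //; rationality.
rewrite -op1_bprod_red -darboux_step // eig_u op1_cstM ?addSnnS //.
exact: der_cst.
Qed.

End Induction.

Lemma reduced_eigen_le j : (j < n)%N -> forall l, (l <= j)%N -> reduced_eigen l.
Proof.
elim: j => [|j IHj] jn l; first by rewrite leqn0 => /eqP ->; apply: reduced_eigen0.
rewrite leq_eqVlt => /orP[/eqP -> | lj]; last exact: IHj (ltnW jn) l lj.
exact: reduced_eigenS jn (IHj (ltnW jn)).
Qed.

Lemma darboux_chain k : (1 <= k <= n)%N ->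
  [/\ rational (qk k), rational (rk k), rational (wk k) &
      forall f, A k (T k.-1 f) = T k (A k f)].
Proof.
case: k => [//|j] /= jn; have eigen_le := reduced_eigen_le jn.
have rational_upsilon l : (l <= j.+1)%N -> rational (upsilon l).
  move=> lj; have ij i : (i < l)%N -> (i <= j)%N by move=> il; rewrite -ltnS (leq_trans il lj).
  rewrite upsilon_sum => [|i /ij il]; last exact: (red1_neq0 jn eigen_le il).
  apply: (@rational_sum _ _ _ iota_inj l (fun i => D (red i 1%N) / red i 1%N)) => i /ij il.
  exact: (rational_logder_red1 jn eigen_le il).
have ups1 := rational_upsilon _ (leqnn j.+1); have ups0 := rational_upsilon _ (leqnSn j).
have sig1 := rational_sigma jn; have sig0 := rational_sigma (ltnW jn).
split; last exact: darboux_step jn eigen_le.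
- by rewrite /Defs.qk; rationality.
- by rewrite /Defs.rk; rationality.
- by rewrite /Defs.wk; rationality.
Qed.

End DarbouxChain.

Unset Implicit Arguments.

Theorem mainTheorem3
  (R : realType) (E : fieldType) (D : E -> E) (iota : {rmorphism {poly R[i]} -> E})
  (hD : derivation D) (hinj : injective iota)
  (hDiota : forall a : {poly R[i]}, D (iota a) = iota (a^`()))
  (p q0 r0 : E) (hp : rationalE iota p) (hp0 : p != 0)
  (hq0 : rationalE iota q0) (hr0 : rationalE iota r0)
  (n : nat) (phi : nat -> E) (lambda : nat -> R[i]) (b : nat -> E)
  (hphi : forall k, (1 <= k <= n)%N -> quasi_rational D iota (phi k))
  (heig : forall k, (1 <= k <= n)%N ->
            op2 D p q0 r0 (phi k) = cst iota (lambda k) * phi k)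
  (hdist : forall i j, (1 <= i)%N -> (i < j)%N -> (j <= n)%N -> lambda i != lambda j)
  (hb : forall k, (1 <= k <= n)%N -> rationalE iota (b k) /\ b k != 0) :
  forall k, (1 <= k <= n)%N ->
    [/\ rationalE iota (qk D p q0 b k),
        rationalE iota (rk D p q0 r0 b phi k),
        rationalE iota (wk D b phi k) &
        forall f : E,
          op1 D (b k) (wk D b phi k) (op2 D p (qk D p q0 b k.-1) (rk D p q0 r0 b phi k.-1) f)
          = op2 D p (qk D p q0 b k) (rk D p q0 r0 b phi k) (op1 D (b k) (wk D b phi k) f)].
Proof.
have two_neq0 : (2%:R : E) != 0.
  by rewrite -(rmorph_nat iota) iota_eq0 // -polyC_natr polyC_eq0 pnatr_eq0.
exact: (darboux_chain hD hinj hDiota two_neq0 hp hq0 hr0 hphi heig hdist hb).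
Qed.
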